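(* Let $\mathcal{P}'$ be a $(K',F',Z',S')$-PDA and write $g'=F'-Z'$. Let $m$ be a positive integer divisible by $6$. Then there exists a $(K,F,Z,S)$-PDA with $K=mK'$, $F=mF'$, $Z=mF'-3g'$ and $S=8S'$.
   Context: A $(K,F,Z,S)$-PDA (placement delivery array) is an $F\times K$ array whose entries are either the symbol $*$ or integers from $\{1,\dots,S\}$, each integer of $\{1,\dots,S\}$ appearing at least once, such that: (A) each column contains exactly $Z$ entries equal to $*$; (B) no integer appears more than once in any row or any column; (C) whenever $p_{j_1,k_1}=p_{j_2,k_2}=s$ is an integer with $j_1\ne j_2$ and $k_1\ne k_2$, then $p_{j_1,k_2}=p_{j_2,k_1}=*$. *)

From mathcomp Require Import all_boot.
Set Implicit Arguments. Unset Strict Implicit. Unset Printing Implicit Defensive.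

(* A PDA array with F rows and K columns: entry p j k is [None] for the
   symbol * and [Some s] for the integer s. *)
Definition pda_array (F K : nat) := 'I_F -> 'I_K -> option nat.

Arguments pda_array : clear implicits.
Definition is_PDA (K F Z S : nat) (p : pda_array F K) : Prop :=
  (forall j k s, p j k = Some s -> 1 <= s <= S) /\
  (forall s, 1 <= s <= S -> exists j k, p j k = Some s) /\
  (forall k : 'I_K, #|[set j : 'I_F | p j k == None]| = Z) /\
  (forall (j : 'I_F) (k1 k2 : 'I_K) s,
      p j k1 = Some s -> p j k2 = Some s -> k1 = k2) /\
  (forall (j1 j2 : 'I_F) (k : 'I_K) s,
      p j1 k = Some s -> p j2 k = Some s -> j1 = j2) /\
  (forall (j1 j2 : 'I_F) (k1 k2 : 'I_K) s,
      p j1 k1 = Some s -> p j2 k2 = Some s -> j1 != j2 -> k1 != k2 ->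
      p j1 k2 = None /\ p j2 k1 = None).
Arguments is_PDA : clear implicits.

From mathcomp Require Import all_boot zify.
Set Implicit Arguments. Unset Strict Implicit. Unset Printing Implicit Defensive.

(* The construction is a Kronecker product of placement delivery arrays.
   If P1 is a (K1,F1,Z1,S1)-PDA and P2 a (K2,F2,Z2,S2)-PDA, the array whose
   entry at row (j1,j2) and column (k1,k2) is the pair of symbols
   (P1 j1 k1, P2 j2 k2) when both are integers, and * otherwise, is a
   (K1 K2, F1 F2, F1 F2 - (F1-Z1)(F2-Z2), S1 S2)-PDA: every non-star entry
   of a column is a pair of non-star entries, and conditions (B), (C) are
   checked componentwise.  Pairs of indices and of symbols are encoded by
   the mixed-radix numbering a * F2 + b and (s1 - 1) * S2 + s2.
   With m = 6n, the theorem follows by taking the product of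
     - the n x n identity PDA, an (n, n, n - 1, 1)-PDA,
     - an explicit (6, 6, 3, 8)-PDA, certified by a boolean decision
       procedure for the PDA conditions that is evaluated by computation,
   which gives an (m, m, m - 3, 8)-PDA, and then its product with P',
   whose number of stars per column is mF' - 3(F' - Z'). *)

Section OrdinalPairs.
Variables F1 F2 : nat.

Lemma pair_ord_subproof (a : 'I_F1) (b : 'I_F2) : a * F2 + b < F1 * F2.
Proof. case: a b => [a ha] [b hb] /=; nia. Qed.

Lemma ord_prod_pos (i : 'I_(F1 * F2)) : 0 < F2.
Proof. by case: F2 i => [|//] [i]; rewrite muln0. Qed.

Lemma fst_ord_subproof (i : 'I_(F1 * F2)) : i %/ F2 < F1.
Proof. by rewrite ltn_divLR ?(ord_prod_pos i). Qed.

Lemma snd_ord_subproof (i : 'I_(F1 * F2)) : i %% F2 < F2.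
Proof. by rewrite ltn_pmod ?(ord_prod_pos i). Qed.

Definition pair_ord (a : 'I_F1) (b : 'I_F2) : 'I_(F1 * F2) :=
  Ordinal (pair_ord_subproof a b).
Definition fst_ord (i : 'I_(F1 * F2)) : 'I_F1 := Ordinal (fst_ord_subproof i).
Definition snd_ord (i : 'I_(F1 * F2)) : 'I_F2 := Ordinal (snd_ord_subproof i).

Lemma fst_pair_ord a b : fst_ord (pair_ord a b) = a.
Proof.
apply: val_inj => /=; have hF2 : 0 < F2 by case: (F2) b => [[]|].
by rewrite divnMDl // divn_small ?addn0.
Qed.

Lemma snd_pair_ord a b : snd_ord (pair_ord a b) = b.
Proof. by apply: val_inj => /=; rewrite modnMDl modn_small. Qed.

Lemma pair_ordK i : pair_ord (fst_ord i) (snd_ord i) = i.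
Proof. by apply: val_inj => /=; rewrite -divn_eq. Qed.

Lemma ord_pair_inj i i' :
  fst_ord i = fst_ord i' -> snd_ord i = snd_ord i' -> i = i'.
Proof. by move=> E1 E2; rewrite -(pair_ordK i) -(pair_ordK i') E1 E2. Qed.

End OrdinalPairs.

Section SymbolPairs.
Variables S1 S2 : nat.

Definition pair_sym (s1 s2 : nat) : nat := (s1 - 1) * S2 + s2.

Lemma pair_sym_range s1 s2 :
  1 <= s1 <= S1 -> 1 <= s2 <= S2 -> 1 <= pair_sym s1 s2 <= S1 * S2.
Proof.
move=> h1 h2; have : (s1 - 1) * S2 <= (S1 - 1) * S2 by apply: leq_mul; lia.
rewrite /pair_sym; nia.
Qed.

Lemma pair_sym_inj s1 s2 t1 t2 :
  1 <= s1 -> 1 <= t1 -> 1 <= s2 <= S2 -> 1 <= t2 <= S2 ->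
  pair_sym s1 s2 = pair_sym t1 t2 -> s1 = t1 /\ s2 = t2.
Proof.
rewrite /pair_sym => hs1 ht1 hs2 ht2 E.
have E' : (s1 - 1) * S2 + (s2 - 1) = (t1 - 1) * S2 + (t2 - 1) by lia.
have hS2 : 0 < S2 by lia.
have Ediv := congr1 (divn^~ S2) E'; have Emod := congr1 (modn^~ S2) E'.
rewrite /= !divnMDl // !divn_small ?addn0 in Ediv; [|lia..].
rewrite /= !modnMDl !modn_small in Emod; lia.
Qed.

Lemma pair_sym_surj s : 1 <= s <= S1 * S2 ->
  exists s1 s2, [/\ 1 <= s1 <= S1, 1 <= s2 <= S2 & s = pair_sym s1 s2].
Proof.
move=> hs; have hS2 : 0 < S2 by case: (S2) hs; rewrite ?muln0 //; lia.
exists ((s - 1) %/ S2).+1, ((s - 1) %% S2).+1; split.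
- by rewrite /= ltn_divLR //; lia.
- by rewrite ltn_pmod.
- by rewrite /pair_sym subSS subn0 addnS -divn_eq; lia.
Qed.

End SymbolPairs.

Lemma column_integers F K Z (p : pda_array F K) (k : 'I_K) :
  #|[set j | p j k == None]| = Z -> #|[set j | p j k != None]| = F - Z.
Proof.
move=> <-; have := cardsC [set j | p j k != None]; rewrite card_ord.
have -> : ~: [set j | p j k != None] = [set j | p j k == None].
  by apply/setP => j; rewrite !inE negbK.
lia.
Qed.

Section Kronecker.
Variables (K1 F1 Z1 S1 K2 F2 Z2 S2 : nat).
Variables (P1 : pda_array F1 K1) (P2 : pda_array F2 K2).
Hypothesis PDA1 : is_PDA K1 F1 Z1 S1 P1.
Hypothesis PDA2 : is_PDA K2 F2 Z2 S2 P2.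

Definition kron : pda_array (F1 * F2) (K1 * K2) := fun i c =>
  match P1 (fst_ord i) (fst_ord c), P2 (snd_ord i) (snd_ord c) with
  | Some s1, Some s2 => Some (pair_sym S2 s1 s2)
  | _, _ => None
  end.

Lemma kron_Some i c s : kron i c = Some s -> exists s1 s2,
  [/\ P1 (fst_ord i) (fst_ord c) = Some s1, P2 (snd_ord i) (snd_ord c) = Some s2
    & s = pair_sym S2 s1 s2].
Proof.
rewrite /kron; case: (P1 _ _) => [s1|] //; case: (P2 _ _) => [s2|] // [<-].
by exists s1, s2.
Qed.

Lemma kron_same_symbol i c i' c' s :
  kron i c = Some s -> kron i' c' = Some s -> exists s1 s2,
  [/\ P1 (fst_ord i) (fst_ord c) = Some s1, P1 (fst_ord i') (fst_ord c') = Some s1,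
      P2 (snd_ord i) (snd_ord c) = Some s2 & P2 (snd_ord i') (snd_ord c') = Some s2].
Proof.
case: PDA1 PDA2 => [R1 _] [R2 _].
move=> /kron_Some [s1 [s2 [e1 e2 ->]]] /kron_Some [t1 [t2 [e1' e2' E]]].
have [h1 h1'] := (R1 _ _ _ e1, R1 _ _ _ e1').
have [h2 h2'] := (R2 _ _ _ e2, R2 _ _ _ e2').
have [eq1 eq2] : s1 = t1 /\ s2 = t2 by apply: (pair_sym_inj (S2 := S2)); lia.
by exists s1, s2; rewrite eq1 eq2 in e1 e2 *.
Qed.

Lemma kron_range i c s : kron i c = Some s -> 1 <= s <= S1 * S2.
Proof.
case: PDA1 PDA2 => [R1 _] [R2 _] /kron_Some [s1 [s2 [e1 e2 ->]]].
exact: pair_sym_range (R1 _ _ _ e1) (R2 _ _ _ e2).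
Qed.

Lemma kron_cover s : 1 <= s <= S1 * S2 -> exists i c, kron i c = Some s.
Proof.
case: PDA1 PDA2 => [_ [C1 _]] [_ [C2 _]].
move=> /pair_sym_surj [s1 [s2 [/C1 [j1 [k1 e1]] /C2 [j2 [k2 e2]] ->]]].
exists (pair_ord j1 j2), (pair_ord k1 k2).
by rewrite /kron !fst_pair_ord !snd_pair_ord e1 e2.
Qed.

Lemma kron_column_integers c :
  #|[set i | kron i c != None]| = (F1 - Z1) * (F2 - Z2).
Proof.
case: PDA1 PDA2 => [_ [_ [Z1P _]]] [_ [_ [Z2P _]]].
set A1 := [set j | P1 j (fst_ord c) != None].
set A2 := [set j | P2 j (snd_ord c) != None].
have -> : [set i | kron i c != None] =
          (fun x => pair_ord x.1 x.2) @: setX A1 A2.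
  apply/setP => i; rewrite inE; apply/idP/imsetP.
  - move=> nz; exists (fst_ord i, snd_ord i); last by rewrite pair_ordK.
    by move: nz; rewrite /kron !inE; case: (P1 _ _); case: (P2 _ _).
  - move=> [[j1 j2]]; rewrite !inE /= => /andP [nz1 nz2] ->.
    by rewrite /kron !fst_pair_ord !snd_pair_ord; case: (P1 _ _) nz1; case: (P2 _ _) nz2.
rewrite card_imset; last first.
  move=> [a b] [a' b'] /= E.
  have := congr1 (@fst_ord _ _) E; have := congr1 (@snd_ord _ _) E.
  by rewrite !fst_pair_ord !snd_pair_ord => -> ->.
by rewrite cardsX (column_integers (Z1P _)) (column_integers (Z2P _)).
Qed.

Lemma kron_column_stars c :
  #|[set i | kron i c == None]| = F1 * F2 - (F1 - Z1) * (F2 - Z2).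
Proof.
have := cardsC [set i | kron i c == None]; rewrite card_ord.
have -> : ~: [set i | kron i c == None] = [set i | kron i c != None].
  by apply/setP => i; rewrite !inE.
rewrite kron_column_integers; lia.
Qed.

Lemma kron_row i c c' s : kron i c = Some s -> kron i c' = Some s -> c = c'.
Proof.
case: PDA1 PDA2 => [_ [_ [_ [Row1 _]]]] [_ [_ [_ [Row2 _]]]].
move=> e e'; have [s1 [s2 [e1 e1' e2 e2']]] := kron_same_symbol e e'.
exact: ord_pair_inj (Row1 _ _ _ _ e1 e1') (Row2 _ _ _ _ e2 e2').
Qed.

Lemma kron_col i i' c s : kron i c = Some s -> kron i' c = Some s -> i = i'.
Proof.
case: PDA1 PDA2 => [_ [_ [_ [_ [Col1 _]]]]] [_ [_ [_ [_ [Col2 _]]]]].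
move=> e e'; have [s1 [s2 [e1 e1' e2 e2']]] := kron_same_symbol e e'.
exact: ord_pair_inj (Col1 _ _ _ _ e1 e1') (Col2 _ _ _ _ e2 e2').
Qed.

(* Condition (C): if the rows differ in the first factor, then so do the
   columns (by (B) for P1) and (C) for P1 applies; otherwise the columns
   agree in the first factor (by (B) for P1), so rows and columns both
   differ in the second factor and (C) for P2 applies. *)
Lemma kron_cross i i' c c' s :
  kron i c = Some s -> kron i' c' = Some s -> i != i' -> c != c' ->
  kron i c' = None /\ kron i' c = None.
Proof.
case: PDA1 PDA2 => [_ [_ [_ [Row1 [Col1 Cross1]]]]] [_ [_ [_ [_ [_ Cross2]]]]].
move=> e e' ni nc; have [s1 [s2 [e1 e1' e2 e2']]] := kron_same_symbol e e'.
rewrite /kron; have [fi | nfi] := eqVneq (fst_ord i) (fst_ord i').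
- have fc : fst_ord c = fst_ord c' by apply: Row1 e1 _; rewrite fi.
  have si : snd_ord i != snd_ord i'.
    by apply: contraNneq ni => si; apply/eqP/ord_pair_inj.
  have sc : snd_ord c != snd_ord c'.
    by apply: contraNneq nc => sc; apply/eqP/ord_pair_inj.
  have [-> ->] := Cross2 _ _ _ _ _ e2 e2' si sc.
  by case: (P1 _ _); case: (P1 _ _).
- have fc : fst_ord c != fst_ord c'.
    by apply: contra_neq nfi => fc; apply: Col1 e1 _; rewrite fc.
  by have [-> ->] := Cross1 _ _ _ _ _ e1 e1' nfi fc.
Qed.

Lemma kron_PDA :
  is_PDA (K1 * K2) (F1 * F2) (F1 * F2 - (F1 - Z1) * (F2 - Z2)) (S1 * S2) kron.
Proof.
split; [exact: kron_range | split; [exact: kron_cover | split]].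
- exact: kron_column_stars.
- split; [exact: kron_row | split; [exact: kron_col | exact: kron_cross]].
Qed.

End Kronecker.

Definition identity_pda (n : nat) : pda_array n n :=
  fun j k => if j == k then Some 1 else None.
Arguments identity_pda : clear implicits.

Lemma identity_PDA n : 0 < n -> is_PDA n n (n - 1) 1 (identity_pda n).
Proof.
move=> n_gt0; rewrite /identity_pda; split; [|split; [|split; [|split; [|split]]]].
- by move=> j k s; case: (j == k) => // -[<-].
- move=> s hs; have -> : s = 1 by lia.
  by case: n n_gt0 => [|n] // _; exists ord0, ord0; rewrite eqxx.
- move=> k; have -> : [set j | (if j == k then Some 1 else None) == None] = [set~ k].
    by apply/setP => j; rewrite !inE; case: (j == k).
  by rewrite cardsC1 card_ord subn1.
- by move=> j k1 k2 s; case: eqP => // <- _; case: eqP.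
- by move=> j1 j2 k s; case: eqP => // -> _; case: eqP.
- move=> j1 j2 k1 k2 s; case: eqP => // -> _; case: eqP => // -> _ nj _.
  by rewrite (negbTE nj) eq_sym (negbTE nj).
Qed.

(* A decision procedure for the PDA conditions on an array given by a
   function of natural-number indices; it ranges over explicit lists
   [iota 0 n] so that it evaluates by computation, and certifies the
   explicit base array below. *)
Definition all_below (n : nat) (P : pred nat) : bool := all P (iota 0 n).
Definition has_below (n : nat) (P : pred nat) : bool := has P (iota 0 n).

Lemma all_belowP n P : all_below n P -> forall i : 'I_n, P i.
Proof. by move=> /allP H i; apply: H; rewrite mem_iota ltn_ord. Qed.

Lemma has_belowP n P : has_below n P -> exists i : 'I_n, P i.
Proof.
by case/hasP => i; rewrite mem_iota add0n => /andP [_ lt_in] Pi; exists (Ordinal lt_in).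
Qed.

Lemma card_ord_count n (P : pred nat) :
  #|[set i : 'I_n | P i]| = count P (iota 0 n).
Proof. by rewrite cardsE cardE /enum_mem size_filter unlock -val_ord_enum count_map. Qed.

Definition pda_check (K F Z S : nat) (q : nat -> nat -> option nat) : bool :=
  [&& all_below F (fun j => all_below K (fun k =>
        if q j k is Some s then 0 < s <= S else true)),
      all (fun s => has_below F (fun j => has_below K (fun k => q j k == Some s)))
          (iota 1 S),
      all_below K (fun k => count (fun j => q j k == None) (iota 0 F) == Z),
      all_below F (fun j => all_below K (fun k1 => all_below K (fun k2 =>
        (q j k1 != None) && (q j k1 == q j k2) ==> (k1 == k2)))),
      all_below F (fun j1 => all_below F (fun j2 => all_below K (fun k =>
        (q j1 k != None) && (q j1 k == q j2 k) ==> (j1 == j2)))) &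
      all_below F (fun j1 => all_below F (fun j2 =>
        all_below K (fun k1 => all_below K (fun k2 =>
          [&& q j1 k1 != None, q j1 k1 == q j2 k2, j1 != j2 & k1 != k2] ==>
          (q j1 k2 == None) && (q j2 k1 == None)))))].

Lemma pda_checkP K F Z S (q : nat -> nat -> option nat) :
  pda_check K F Z S q -> is_PDA K F Z S (fun (j : 'I_F) (k : 'I_K) => q j k).
Proof.
case/and5P => /all_belowP R /allP C /all_belowP St /all_belowP Row /andP [].
move=> /all_belowP Col /all_belowP Cr.
split; [|split; [|split; [|split; [|split]]]].
- by move=> j k s e; move: (all_belowP (R j) k); rewrite e.
- move=> s hs; have /C /has_belowP [j /has_belowP [k /eqP e]] : s \in iota 1 S.
    by rewrite mem_iota; case/andP: hs => -> /=; rewrite add1n ltnS.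
  by exists j, k.
- by move=> k; rewrite (card_ord_count _ (fun j => q j k == None)); apply/eqP.
- move=> j k1 k2 s e1 e2; apply/val_inj/eqP.
  by move: (all_belowP (all_belowP (Row j) k1) k2); rewrite e1 e2 eqxx.
- move=> j1 j2 k s e1 e2; apply/val_inj/eqP.
  by move: (all_belowP (all_belowP (Col j1) j2) k); rewrite e1 e2 eqxx.
- move=> j1 j2 k1 k2 s e1 e2 nj nk.
  move: (all_belowP (all_belowP (all_belowP (Cr j1) j2) k1) k2).
  by rewrite e1 e2 eqxx nj nk /= => /andP [/eqP -> /eqP ->].
Qed.

(* An explicit (6,6,3,8)-PDA; 0 stands for the symbol *. *)
Definition base_table : seq (seq nat) :=
  [:: [:: 1; 4; 7; 0; 0; 0];
      [:: 2; 5; 8; 0; 0; 0];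
      [:: 3; 6; 0; 7; 8; 0];
      [:: 0; 0; 3; 1; 4; 5];
      [:: 0; 0; 0; 2; 0; 6];
      [:: 0; 0; 0; 0; 2; 7]].

Definition base_entry (j k : nat) : option nat :=
  if nth 0 (nth [::] base_table j) k is s.+1 then Some s.+1 else None.

Definition base_pda : pda_array 6 6 := fun j k => base_entry j k.

Lemma base_PDA : is_PDA 6 6 3 8 base_pda.
Proof. by apply: pda_checkP; vm_compute. Qed.

Lemma base_multiple_PDA m : 0 < m -> 6 %| m ->
  exists B : pda_array m m, is_PDA m m (m - 3) 8 B.
Proof.
move=> m_gt0 /dvdnP [n def_m]; subst m.
have n_gt0 : 0 < n by move: m_gt0; rewrite muln_gt0 => /andP [].
have := kron_PDA (identity_PDA n_gt0) base_PDA.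
have -> : n * 6 - (n - (n - 1)) * (6 - 3) = n * 6 - 3 by lia.
by exists (kron 8 (identity_pda n) base_pda).
Qed.

Theorem theorem5p2 (K' F' Z' S' : nat) (P' : pda_array F' K') (m : nat) :
  is_PDA K' F' Z' S' P' -> 0 < m -> 6 %| m ->
  exists P : pda_array (m * F') (m * K'),
    is_PDA (m * K') (m * F') (m * F' - 3 * (F' - Z')) (8 * S') P.
Proof.
move=> PDA' m_gt0 m6; have [B PDA_B] := base_multiple_PDA m_gt0 m6.
have m_ge3 : 3 <= m by apply: leq_trans (dvdn_leq m_gt0 m6).
have := kron_PDA PDA_B PDA'.
have -> : m - (m - 3) = 3 by lia.
by exists (kron S' B P').
Qed.
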